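(* Let $\xi\in\mathbf{Sp}_6(F)$ be the matrix with $1$'s on the diagonal and additional entries $\xi_{41}=1$ and $\xi_{63}=1$ (all other entries $0$). The double coset space $P^\circ_{(3,0)}(F)\backslash\mathbf{Sp}_6(F)/\iota(\mathbf{SL}_2\times\mathbf{Sp}_4)(F)$ consists of two elements, represented by $I_6$ and $\xi$, and: (1) $P^\circ_{(3,0)}(F)\cdot I_6$ corresponds to the isotropic subspace $\langle f_1,f_2,f_3\rangle$ and its stabilizer in $(\mathbf{SL}_2\times\mathbf{Sp}_4)(F)$ is $P^\circ_{(1,0)}(F)\times P^\circ_{(2,0)}(F)$; (2) $P^\circ_{(3,0)}(F)\cdot\xi$ corresponds to $\langle e_1+f_3,e_3+f_1,f_2\rangle$ and its stabilizer in $(\mathbf{SL}_2\times\mathbf{Sp}_4)(F)$ is $$S_\xi=\left\{\begin{pmatrix}a&b\\c&d\end{pmatrix}\times\begin{pmatrix}\alpha&&&\\&d&c&\\&b&a&\\&&&\alpha^{-1}\end{pmatrix}:\alpha\in F^\times,\ \begin{pmatrix}a&b\\c&d\end{pmatrix}\in\mathbf{SL}_2(F)\right\}\cdot(\{I_2\}\times U_{(1,2)}(F)).$$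
   Context: $F$ is a number field. $\mathbf{Sp}_{2n}=\{g:{}^tgJ_{2n}g=J_{2n}\}$, $J_{2n}=\begin{pmatrix}0&I'_n\\-I'_n&0\end{pmatrix}$, $I'_n$ antidiagonal with ones. $W_6$ has ordered basis $e_1,e_2,e_3,f_3,f_2,f_1$ (row vectors, right action); a coset $P^\circ_{(3,0)}g$ corresponds to the maximal isotropic subspace $\langle f_1,f_2,f_3\rangle g$. $P^\circ_{(n,0)}$ is the Siegel parabolic (upper block triangular with $n\times n$ blocks) of $\mathbf{Sp}_{2n}$ ($P^\circ_{(1,0)}$ is the upper triangular Borel of $\mathbf{SL}_2$), $U_{(1,2)}$ is the unipotent radical of the Klingen parabolic of $\mathbf{Sp}_4$ (stabilizer of the first basis line, Levi $\mathrm{diag}(a,r,a^{-1})$). $\iota:\mathbf{SL}_2\times\mathbf{Sp}_4\to\mathbf{Sp}_6$, $\begin{pmatrix}a&b\\c&d\end{pmatrix}\times g\mapsto\begin{pmatrix}a&&b\\&g&\\c&&d\end{pmatrix}$ (block positions: first row/column, middle $4\times4$, last row/column). *)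

From HB Require Import structures.
From mathcomp Require Import all_boot all_order all_algebra all_field.
Set Implicit Arguments. Unset Strict Implicit. Unset Printing Implicit Defensive.
Import GRing.Theory.
Local Open Scope ring_scope.

Section SpDefs.
Variable F : fieldType.

Definition antid (n : nat) : 'M[F]_n :=
  \matrix_(i < n, j < n) (if (i + j)%N == n.-1 then 1 else 0).

Definition Jmx (n : nat) : 'M[F]_(n + n) :=
  block_mx 0 (antid n) (- antid n) 0.

Definition inSp (n : nat) (g : 'M[F]_(n + n)) : Prop :=
  g^T *m Jmx n *m g = Jmx n.

(* Siegel parabolic P°_{(n,0)}: upper block triangular with n x n blocks *)
Definition inSiegel (n : nat) (g : 'M[F]_(n + n)) : Prop :=
  inSp g /\ dlsubmx g = 0.

Definition inSL2 (A : 'M[F]_2) : Prop := \det A = 1.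

(* P°_{(1,0)}: upper triangular Borel of SL_2 *)
Definition inBorel (A : 'M[F]_2) : Prop := inSL2 A /\ A 1 0 = 0.

(* iota : SL_2 x Sp_4 -> Sp_6, block positions first/last row-col and
   middle 4x4 block *)
Definition iota (A : 'M[F]_2) (g : 'M[F]_(2 + 2)) : 'M[F]_(3 + 3) :=
  \matrix_(i < 3 + 3, j < 3 + 3)
    if ((i == 0%N :> nat) || (i == 5%N :> nat)) &&
       ((j == 0%N :> nat) || (j == 5%N :> nat))
    then A (inord (i %/ 5)) (inord (j %/ 5))
    else if ((0 < i < 5)%N && (0 < j < 5)%N)
    then g (inord i.-1) (inord j.-1)
    else 0.

(* standard basis vectors of W_6 (row vectors); ordered basis
   e1,e2,e3,f3,f2,f1 = indices 0,1,2,3,4,5 *)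
Definition bv (k : nat) : 'rV[F]_(3 + 3) := delta_mx 0 (inord k).
Definition e1 := bv 0. Definition e2 := bv 1. Definition e3 := bv 2.
Definition f3 := bv 3. Definition f2 := bv 4. Definition f1 := bv 5.

Definition fspan : 'M[F]_(3, 3 + 3) := col_mx f1 (col_mx f2 f3).

(* the maximal isotropic subspace attached to the coset P° g :
   <f1,f2,f3> g, as a matrix whose row space is that subspace *)
Definition lagr (g : 'M[F]_(3 + 3)) : 'M[F]_(3, 3 + 3) := fspan *m g.

(* xi = I_6 + E_{41} + E_{63} (1-indexed) *)
Definition xi : 'M[F]_(3 + 3) :=
  1%:M + delta_mx (inord 3) (inord 0) + delta_mx (inord 5) (inord 2).

Definition inDC (x g : 'M[F]_(3 + 3)) : Prop :=
  exists p A h, [/\ inSiegel p, inSL2 A, inSp h & g = p *m x *m iota A h].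

(* (A,h) in SL_2 x Sp_4 stabilizes the point P° x of P°\Sp_6 under the
   right action via iota:  P° x iota(A,h) = P° x *)
Definition stabilizes (x : 'M[F]_(3 + 3)) (A : 'M[F]_2) (h : 'M[F]_(2 + 2)) : Prop :=
  exists2 p, inSiegel p & x *m iota A h = p *m x.

(* U_{(1,2)}: unipotent radical of the Klingen parabolic of Sp_4:
   symplectic matrices of the shape
   [[1,*,*,*],[0,1,0,*],[0,0,1,*],[0,0,0,1]] *)
Definition inU12 (u : 'M[F]_(2 + 2)) : Prop :=
  inSp u /\
  (forall i j : 'I_(2 + 2),
     (i == j -> u i j = 1) /\ ((j < i)%N -> u i j = 0)) /\
  u (inord 1) (inord 2) = 0.

Definition mlev (alpha : F) (A : 'M[F]_2) : 'M[F]_(2 + 2) :=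
  \matrix_(i < 2 + 2, j < 2 + 2)
    match (i : nat), (j : nat) with
    | 0, 0 => alpha
    | 1, 1 => A 1 1
    | 1, 2 => A 1 0
    | 2, 1 => A 0 1
    | 2, 2 => A 0 0
    | 3, 3 => alpha^-1
    | _, _ => 0
    end.

Definition inSxi (A : 'M[F]_2) (h : 'M[F]_(2 + 2)) : Prop :=
  exists alpha : F, exists u : 'M[F]_(2 + 2),
    [/\ alpha != 0, inSL2 A, inU12 u & h = mlev alpha A *m u].

End SpDefs.

(* A coset P g is determined by its Lagrangian L = <f1, f2, f3> g, and iota A h
   acts on W_6 = W_2 (+) W_4, W_2 = <e1, f1>, W_4 = <e2, e3, f3, f2>, by A on W_2
   and by h on W_4.  If the projection of L to W_4 is injective, isotropy forces
   the projection to W_2 to be onto with a one-dimensional kernel; the hyperbolic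
   pair and the isotropic line of W_4 so obtained extend to a symplectic basis,
   which gives an iota 1 h moving L_xi = <e1 + f3, e3 + f1, f2> onto L.
   Otherwise L meets W_2 in a line <v>, the W_2-projection of L is orthogonal to
   v and hence lies in <v>, the W_4-projection of L is an isotropic plane, and
   some iota A h moves <f1, f2, f3> onto L.  The rank of the projection to W_2
   (2 for L_xi, 1 for <f1, f2, f3>) separates the two orbits, and the
   stabilizers are read off the block form of iota A h on both Lagrangians. *)

From HB Require Import structures.
From mathcomp Require Import all_boot all_order all_algebra all_field.
From mathcomp Require Import fingroup perm zify ring.
Import GRing.Theory.
Local Open Scope ring_scope.
Set Implicit Arguments. Unset Strict Implicit. Unset Printing Implicit Defensive.

Section Symplectic.
Variables (F : fieldType) (n : nat).
Local Notation J := (Jmx F n).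

Lemma antid_perm : antid F n = perm_mx (perm (@rev_ord_inj n)).
Proof.
apply/matrixP => i j; rewrite !mxE permE -val_eqE /=.
have := ltn_ord i; have := ltn_ord j.
by do 2 case: eqP => //=; lia.
Qed.

Lemma antid_sqr : antid F n *m antid F n = 1%:M.
Proof.
rewrite antid_perm -perm_mxM.
suff -> : (perm (@rev_ord_inj n) * perm (@rev_ord_inj n))%g = 1%g by rewrite perm_mx1.
by apply/permP => i; rewrite permM !permE rev_ordK.
Qed.

Lemma Jmx_sqr : J *m J = -1.
Proof.
rewrite /Jmx mulmx_block !(mulmx0, mul0mx, add0r, addr0) mulmxN mulNmx antid_sqr.
by rewrite -!raddfN /= scalar_mx_block.
Qed.

Lemma trmx_antid : (antid F n)^T = antid F n.
Proof. by apply/matrixP => i j; rewrite !mxE addnC. Qed.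

Lemma Jmx_tr : J^T = - J.
Proof.
by rewrite /Jmx tr_block_mx !trmx0 linearN /= trmx_antid opp_block_mx !oppr0 opprK.
Qed.

Lemma JmxE : J = \matrix_(i, j)
  if (i + j == (n + n).-1)%N then (if (i < n)%N then 1 else -1) else 0.
Proof.
apply/matrixP => i j; have := ltn_ord i; have := ltn_ord j.
rewrite /Jmx; case: (split_ordP i) => i' ->; case: (split_ordP j) => j' ->.
all: rewrite ?block_mxEul ?block_mxEur ?block_mxEdl ?block_mxEdr !mxE /=.
all: have := ltn_ord i'; have := ltn_ord j'.
all: do 2?case: eqP; try case: ifP; rewrite ?oppr0 // => *; exfalso; lia.
Qed.

Lemma Jmx_unit : J \in unitmx.
Proof.
have : J *m - J = 1 by rewrite mulmxN Jmx_sqr opprK.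
by case/mulmx1_unit.
Qed.

Lemma inSp_trmx (g : 'M[F]_(n + n)) : inSp g <-> g *m J *m g^T = J.
Proof.
suff swap (X Y : 'M[F]_(n + n)) : X *m J *m Y = J -> Y *m J *m X = J.
  by split; apply: swap.
move=> XJY; have : X *m (J *m Y *m - J) = 1 by rewrite !mulmxA XJY mulmxN Jmx_sqr opprK.
move/mulmx1C => /(congr1 (mulmx J)).
by rewrite !mulmxA mulmxN Jmx_sqr !mulNmx mul1mx opprK mulmx1.
Qed.

Lemma inSp1 : inSp (1%:M : 'M[F]_(n + n)).
Proof. by rewrite /inSp trmx1 mul1mx mulmx1. Qed.

Lemma inSp_mul (g h : 'M[F]_(n + n)) : inSp g -> inSp h -> inSp (g *m h).
Proof.
by rewrite /inSp trmx_mul => Sg Sh; rewrite !mulmxA -(mulmxA _ g^T) -(mulmxA _ (g^T *m _)) Sg.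
Qed.

Lemma inSp_unit (g : 'M[F]_(n + n)) : inSp g -> g \in unitmx.
Proof.
move=> Sg; have : g^T *m (J *m g *m - J) = 1 by rewrite !mulmxA Sg mulmxN Jmx_sqr opprK.
by case/mulmx1_unit => _; rewrite !unitmx_mul => /andP[/andP[]].
Qed.

Lemma inSp_inv (g : 'M[F]_(n + n)) : inSp g -> inSp (invmx g).
Proof.
move=> Sg; have Ug := inSp_unit Sg.
rewrite /inSp -{1}Sg !mulmxA -trmx_mul mulmxV // trmx1 mul1mx.
by rewrite -mulmxA mulmxV // mulmx1.
Qed.

End Symplectic.

Section SymplecticForm.
Variables (F : fieldType) (n : nat).
Local Notation J := (Jmx F n).

Lemma mxrank_mul_unit_tr k (Q : 'M[F]_(k, n + n)) : \rank (J *m Q^T) = \rank Q.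
Proof.
by rewrite -mxrank_tr trmx_mul trmxK mxrankMfree // row_free_unit unitmx_tr Jmx_unit.
Qed.

Lemma mxrank_orthogonal k l (N : 'M[F]_(k, n + n)) (Q : 'M[F]_(l, n + n)) :
  N *m J *m Q^T = 0 -> (\rank N + \rank Q <= n + n)%N.
Proof.
move=> NQ; have : (N <= kermx (J *m Q^T))%MS by apply/sub_kermxP; rewrite mulmxA.
move/mxrankS; rewrite mxrank_ker mxrank_mul_unit_tr.
by have := rank_leq_col Q; lia.
Qed.

Definition sform (u v : 'rV[F]_(n + n)) : F := (u *m J *m v^T) 0 0.

Lemma sformC u v : sform u v = - sform v u.
Proof.
rewrite /sform; have -> : (u *m J *m v^T) 0 0 = (u *m J *m v^T)^T 0 0 by rewrite [RHS]mxE.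
rewrite !trmx_mul trmxK Jmx_tr.
by rewrite mulNmx mulmxN [LHS]mxE mulmxA.
Qed.

Lemma sformDZl a u v w : sform (a *: u + v) w = a * sform u w + sform v w.
Proof. by rewrite /sform !mulmxDl -!scalemxAl !mxE. Qed.

Lemma sform_gram k l (N : 'M[F]_(k, n + n)) (Q : 'M[F]_(l, n + n)) i j :
  (N *m J *m Q^T) i j = sform (row i N) (row j Q).
Proof.
rewrite /sform !mxE; apply: eq_bigr => a _; rewrite !mxE; congr (_ * _).
by apply: eq_bigr => b _; rewrite !mxE.
Qed.

End SymplecticForm.

(* Entries addressed by natural numbers: after [case_ord], [rewrite entryE]
   puts every entry of a concrete small matrix in a normal form that [ring]
   can treat as an atom. *)
Definition entry (R : Type) m n (M : 'M[R]_(m.+1, n.+1)) (i j : nat) : R :=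
  M (inord i) (inord j).
Arguments entry : simpl never.

Lemma entryE (R : Type) m n (M : 'M[R]_(m.+1, n.+1)) i j : M i j = entry M i j.
Proof. by rewrite /entry !inord_val. Qed.

Ltac case_ord i := case: i => [[|[|[|[|[|[|[|?]]]]]]] ?] //.
Ltac expand_mx := repeat progress rewrite ?mxE ?big_ord_recr ?big_ord0 /=.
Ltac mx_norm := rewrite /= ?mxE /= ?div0n ?divnn /= ?inordK //= ?mxE /= -?val_eqE /=
  ?inordK //= ?entryE /= ?modn_small ?inordK //= ?(mul0r, mulr0, mul1r, mulr1, add0r, addr0).
Ltac mx_entry E := move: E; expand_mx; mx_norm.
Ltac mx_compute := let i := fresh "i" in let j := fresh "j" in
  apply/matrixP => i j; rewrite ?JmxE; expand_mx; case_ord i; case_ord j; mx_norm;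
  try ring.

Section Sp4Basis.
Variable F : fieldType.

Lemma sform_alt (v : 'rV[F]_(2 + 2)) : sform v v = 0.
Proof. by rewrite /sform JmxE; expand_mx; rewrite ?entryE /=; ring. Qed.

Definition rows4 (r0 r1 r2 r3 : 'rV[F]_(2 + 2)) : 'M[F]_(2 + 2) :=
  \matrix_(i < 2 + 2) if (i == 0%N :> nat) then r0 else if (i == 1%N :> nat) then r1
                      else if (i == 2%N :> nat) then r2 else r3.

(* Symplectic Gram-Schmidt: any [u] with [<u, r3> = 1] becomes orthogonal to
   [r1] and [r2] after adding suitable multiples of [r2] and [r1]. *)
Lemma Sp4_extend_basis (r1 r2 r3 : 'rV[F]_(2 + 2)) : r3 != 0 ->
  sform r1 r2 = 1 -> sform r1 r3 = 0 -> sform r2 r3 = 0 ->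
  exists r0, inSp (rows4 r0 r1 r2 r3).
Proof.
move=> nz3 s12 s13 s23.
have full3 : row_full (Jmx F 2 *m r3^T) by rewrite /row_full mxrank_mul_unit_tr rank_rV nz3.
pose u := (1%:M : 'M[F]_1) *m pinvmx (Jmx F 2 *m r3^T).
have su3 : sform u r3 = 1 by rewrite /sform -mulmxA mulmxKpV ?submx_full // mxE.
pose r0 := sform u r1 *: r2 + (- sform u r2 *: r1 + u).
have s01 : sform r0 r1 = 0 by rewrite !sformDZl sform_alt (sformC r2) s12; ring.
have s02 : sform r0 r2 = 0 by rewrite !sformDZl sform_alt s12; ring.
have s03 : sform r0 r3 = 1 by rewrite !sformDZl s23 s13 su3; ring.
exists r0; apply/inSp_trmx/matrixP => i j.
rewrite sform_gram !rowK JmxE mxE.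
case_ord i; case_ord j; rewrite /= ?sform_alt //.
all: rewrite ?(sformC r1 r0) ?(sformC r2 r0) ?(sformC r3 r0) ?(sformC r2 r1)
  ?(sformC r3 r1) ?(sformC r3 r2) ?s01 ?s02 ?s03 ?s12 ?s13 ?s23 ?oppr0 //.
Qed.

Lemma Sp4_extend_isotropic (B : 'M[F]_(2, 2 + 2)) :
  row_free B -> B *m Jmx F 2 *m B^T = 0 ->
  exists r0 r1, inSp (rows4 r0 r1 (row 0 B) (row 1 B)).
Proof.
move=> freeB isoB.
have fullB : row_full (Jmx F 2 *m B^T) by rewrite /row_full mxrank_mul_unit_tr.
pose u : 'rV[F]_(2 + 2) := delta_mx 0 0 *m pinvmx (Jmx F 2 *m B^T).
have uB : u *m Jmx F 2 *m B^T = delta_mx 0 0 by rewrite -mulmxA mulmxKpV ?submx_full.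
have su0 : sform u (row 0 B) = 1 by rewrite -(row_id 0 u) -sform_gram uB mxE.
have su1 : sform u (row 1 B) = 0 by rewrite -(row_id 0 u) -sform_gram uB mxE.
have sB : sform (row 0 B) (row 1 B) = 0 by rewrite -sform_gram isoB mxE.
have B1 : row 1 B != 0 by rewrite rowE mulmx_free_eq0 // -mxrank_eq0 mxrank_delta.
have [r0 Sr0] := Sp4_extend_basis B1 su0 su1 sB.
by exists r0, u.
Qed.

End Sp4Basis.

Section SplitW6.
Variable F : fieldType.
Local Notation J1 := (Jmx F 1).
Local Notation J2 := (Jmx F 2).
Local Notation J3 := (Jmx F 3).

(* W_6 = <e1, f1> (+) <e2, e3, f3, f2>: [pr2], [pr4] read off the coordinates
   of a row vector in each summand, [in2], [in4] embed the summands back. *)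
Definition pr2 : 'M[F]_(3 + 3, 2) := \matrix_(i, j)
  if ((i == 0%N :> nat) && (j == 0%N :> nat)) || ((i == 5%N :> nat) && (j == 1%N :> nat))
  then 1 else 0.
Definition pr4 : 'M[F]_(3 + 3, 2 + 2) := \matrix_(i, j) if (i == j.+1 :> nat) then 1 else 0.
Definition in2 := pr2^T.
Definition in4 := pr4^T.

Lemma in2_pr2 : in2 *m pr2 = 1%:M. Proof. mx_compute. Qed.
Lemma in4_pr4 : in4 *m pr4 = 1%:M. Proof. mx_compute. Qed.
Lemma in2_pr4 : in2 *m pr4 = 0. Proof. mx_compute. Qed.
Lemma in4_pr2 : in4 *m pr2 = 0. Proof. mx_compute. Qed.
Lemma pr_in_sum : pr2 *m in2 + pr4 *m in4 = 1%:M. Proof. mx_compute. Qed.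

Lemma iotaE (A : 'M[F]_2) (h : 'M[F]_(2 + 2)) :
  iota A h = pr2 *m A *m in2 + pr4 *m h *m in4.
Proof. mx_compute. Qed.

Lemma Jmx3_iota : J3 = iota J1 J2.
Proof. mx_compute. Qed.

Lemma mulmx_iota k (N : 'M[F]_(k, 3 + 3)) (A : 'M[F]_2) (h : 'M[F]_(2 + 2)) :
  N *m iota A h = N *m pr2 *m A *m in2 + N *m pr4 *m h *m in4.
Proof. by rewrite iotaE mulmxDr !mulmxA. Qed.

Lemma iota_mul (A A' : 'M[F]_2) (h h' : 'M[F]_(2 + 2)) :
  iota A h *m iota A' h' = iota (A *m A') (h *m h').
Proof.
rewrite mulmx_iota !iotaE !mulmxDl -!mulmxA !(mulmxA in2) !(mulmxA in4).
by rewrite in2_pr2 in2_pr4 in4_pr2 in4_pr4 !(mulmx0, mul0mx, mul1mx, addr0, add0r).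
Qed.

Lemma iota_pr2 (A : 'M[F]_2) (h : 'M[F]_(2 + 2)) : iota A h *m pr2 = pr2 *m A.
Proof.
by rewrite iotaE mulmxDl -!mulmxA in2_pr2 in4_pr2 !(mulmx0, mulmx1, addr0).
Qed.

Lemma iota_pr4 (A : 'M[F]_2) (h : 'M[F]_(2 + 2)) : iota A h *m pr4 = pr4 *m h.
Proof.
by rewrite iotaE mulmxDl -!mulmxA in2_pr4 in4_pr4 !(mulmx0, mulmx1, add0r).
Qed.

Lemma iota_tr (A : 'M[F]_2) (h : 'M[F]_(2 + 2)) : (iota A h)^T = iota A^T h^T.
Proof. by rewrite !iotaE linearD /= !trmx_mul !trmxK !mulmxA. Qed.

Lemma gram3_split k l (X : 'M[F]_(k, 3 + 3)) (Y : 'M[F]_(l, 3 + 3)) :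
  X *m J3 *m Y^T =
  X *m pr2 *m J1 *m (Y *m pr2)^T + X *m pr4 *m J2 *m (Y *m pr4)^T.
Proof. by rewrite Jmx3_iota mulmx_iota mulmxDl !trmx_mul -!mulmxA. Qed.

Lemma det_mx2 (A : 'M[F]_2) : \det A = A 0 0 * A 1 1 - A 0 1 * A 1 0.
Proof.
rewrite (expand_det_row _ 0) !big_ord_recr big_ord0 /= /cofactor !det_mx11 !mxE /=.
by rewrite !entryE /bump /=; ring.
Qed.

Lemma trmx_Jmx1_mx2 (A : 'M[F]_2) : A^T *m J1 *m A = \det A *: J1.
Proof. rewrite det_mx2; mx_compute. Qed.

Lemma iota_Sp (A : 'M[F]_2) (h : 'M[F]_(2 + 2)) :
  inSL2 A -> inSp h -> inSp (iota A h).
Proof.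
rewrite /inSL2 /inSp => detA Sh.
by rewrite iota_tr Jmx3_iota !iota_mul trmx_Jmx1_mx2 detA scale1r Sh.
Qed.

End SplitW6.

Lemma col_mx_entry (R : Type) m1 m2 n (U : 'M[R]_(m1.+1, n)) (D : 'M[R]_(m2.+1, n)) i j :
  col_mx U D i j = if (i < m1.+1)%N then U (inord i) j else D (inord (i - m1.+1)) j.
Proof.
rewrite mxE; case: splitP => k /= ->.
  by congr (U _ j); apply/val_inj; rewrite /= inordK.
by congr (D _ j); apply/val_inj; rewrite /= addKn inordK.
Qed.

Section Lagrangians.
Variable F : fieldType.
Local Notation J3 := (Jmx F 3).

Lemma bvE k : (k < 6)%N -> bv F k = \row_j (if j == k :> nat then 1 else 0).
Proof.
move=> lt_k6; apply/rowP => j; rewrite !mxE eqxx -val_eqE /= inordK //.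
by case: eqP.
Qed.

Lemma fspanE : fspan F = \matrix_(i, j) if (i + j == 5)%N then 1 else 0.
Proof.
rewrite /fspan /f1 /f2 /f3 !bvE //; apply/matrixP => i j.
by rewrite (@col_mx_entry _ 0 1) (@col_mx_entry _ 0 0) !mxE; case_ord i; case_ord j;
  rewrite /= ?inordK.
Qed.

Lemma fspan_row : fspan F = row_mx 0 (antid F 3).
Proof.
apply/matrixP => i j; rewrite fspanE mxE.
by case: (split_ordP j) => j' ->; rewrite ?row_mxEl ?row_mxEr !mxE; case_ord i; case_ord j'.
Qed.

Lemma fspan_isotropic : fspan F *m J3 *m (fspan F)^T = 0.
Proof.
rewrite fspan_row /Jmx mul_row_block tr_row_mx mul_row_col.
by rewrite !(mulmx0, mul0mx, addr0, add0r, trmx0).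
Qed.

Lemma fspan_row_free : row_free (fspan F).
Proof.
have : fspan F *m (fspan F)^T = 1%:M.
  by rewrite fspan_row tr_row_mx trmx0 mul_row_col mulmx0 add0r trmx_antid antid_sqr.
move/(congr1 mxrank); rewrite mxrank1 => r1.
by rewrite /row_free eqn_leq rank_leq_row -{1}r1 mxrankM_maxl.
Qed.

Lemma Siegel_lagrP (p : 'M[F]_(3 + 3)) : dlsubmx p = 0 <-> (fspan F *m p <= fspan F)%MS.
Proof.
have fspan_sub k (X : 'M[F]_(k, 3 + 3)) : (X <= fspan F)%MS = (lsubmx X == 0).
  rewrite fspan_row; apply/idP/eqP => [/submxP[D ->]|X0].
    by rewrite mul_mx_row row_mxKl mulmx0.
  apply/submxP; exists (rsubmx X *m antid F 3).
  by rewrite mul_mx_row mulmx0 -mulmxA antid_sqr mulmx1 -X0 hsubmxK.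
rewrite fspan_sub fspan_row -{2}[p]submxK mul_row_block row_mxKl mul0mx add0r.
split => [->|/eqP p0]; first by rewrite mulmx0.
by rewrite -[dlsubmx p]mul1mx -antid_sqr -mulmxA p0 mulmx0.
Qed.

Lemma Siegel_of_lagr_sub (g q : 'M[F]_(3 + 3)) : inSp g -> inSp q ->
  (lagr g <= lagr q)%MS -> inSiegel (g *m invmx q).
Proof.
move=> Sg Sq /submxP[D gq]; split; first exact: inSp_mul Sg (inSp_inv Sq).
apply/Siegel_lagrP; rewrite mulmxA [fspan F *m g]gq -mulmxA mulmxK ?inSp_unit //.
exact: submxMl.
Qed.

Lemma inDC_lagr (x g : 'M[F]_(3 + 3)) A h : inSp x -> inSp g -> inSL2 A -> inSp h ->
  (lagr g <= lagr x *m iota A h)%MS -> inDC x g.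
Proof.
move=> Sx Sg SA Sh sub; have Sq := inSp_mul Sx (iota_Sp SA Sh).
exists (g *m invmx (x *m iota A h)), A, h; split => //.
  by apply: Siegel_of_lagr_sub; rewrite // /lagr mulmxA.
by rewrite -mulmxA mulmxKV ?inSp_unit.
Qed.

Lemma stabilizes_lagr (x : 'M[F]_(3 + 3)) A h : inSp x -> inSL2 A -> inSp h ->
  stabilizes x A h <-> (lagr x *m iota A h <= lagr x)%MS.
Proof.
move=> Sx SA Sh; split => [[p [_ /Siegel_lagrP p_sub] xq]|sub].
  by rewrite /lagr -mulmxA xq mulmxA submxMr.
have Sq := inSp_mul Sx (iota_Sp SA Sh).
exists (x *m iota A h *m invmx x); last by rewrite mulmxKV ?inSp_unit.
by apply: Siegel_of_lagr_sub; rewrite // /lagr mulmxA.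
Qed.

End Lagrangians.

Section Xi.
Variable F : fieldType.

Lemma xiE : xi F = \matrix_(i, j) if i == j then 1 else
  if ((i == 3%N :> nat) && (j == 0%N :> nat)) || ((i == 5%N :> nat) && (j == 2%N :> nat))
  then 1 else 0.
Proof.
apply/matrixP => i j; rewrite /xi !mxE -!val_eqE /= !inordK //.
by case_ord i; case_ord j; rewrite /=; ring.
Qed.

Lemma xi_Sp : inSp (xi F).
Proof. rewrite /inSp xiE; mx_compute. Qed.

Lemma lagr_xiE : lagr (xi F) = \matrix_(i, j)
  if ((i == 0%N :> nat) && ((j == 2%N :> nat) || (j == 5%N :> nat)))
     || ((i == 1%N :> nat) && (j == 4%N :> nat))
     || ((i == 2%N :> nat) && ((j == 0%N :> nat) || (j == 3%N :> nat))) then 1 else 0.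
Proof. rewrite /lagr fspanE xiE; mx_compute. Qed.

Lemma lagr_xi_eqmx :
  (lagr (xi F) == col_mx (e1 F + f3 F) (col_mx (e3 F + f1 F) (f2 F)))%MS.
Proof.
set L := col_mx _ _.
have LE : L = \matrix_(i, j)
  if ((i == 0%N :> nat) && ((j == 0%N :> nat) || (j == 3%N :> nat)))
     || ((i == 1%N :> nat) && ((j == 2%N :> nat) || (j == 5%N :> nat)))
     || ((i == 2%N :> nat) && (j == 4%N :> nat)) then 1 else 0.
  rewrite /L /e1 /e3 /f1 /f2 /f3 !bvE //; apply/matrixP => i j.
  rewrite (@col_mx_entry _ 0 1) (@col_mx_entry _ 0 0) !mxE.
  by case_ord i; case_ord j; rewrite /= ?inordK // ?mxE /=; ring.
pose P : 'M[F]_3 := \matrix_(i, j) if (val j == (i + 2) %% 3)%N then 1 else 0.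
apply/andP; split; apply/submxP.
  by exists P^T; rewrite lagr_xiE LE; mx_compute.
by exists P; rewrite lagr_xiE LE; mx_compute.
Qed.

End Xi.

Section ExplicitLagrangians.
Variable F : fieldType.

Lemma lagr1_iota_sub (A : 'M[F]_2) (B : 'M[F]_(2, 2 + 2)) r0 r1 :
  let N := lagr 1%:M *m iota A (rows4 r0 r1 (row 0 B) (row 1 B)) in
  (row 1 A *m in2 F <= N)%MS /\ (B *m in4 F <= N)%MS.
Proof.
rewrite /lagr mulmx1; split; apply/submxP.
  exists (delta_mx 0 0); rewrite fspanE; mx_compute.
exists (\matrix_(i, j) if (val j == 2 - i)%N then 1 else 0); rewrite fspanE; mx_compute.
Qed.

Lemma lagr_xi_iota_sub (H : 'M[F]_(2, 2 + 2)) r0 r3 :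
  let N := lagr (xi F) *m iota 1%:M (rows4 r0 (row 1 H) (row 0 H) r3) in
  ((in2 F + H *m in4 F)%R <= N)%MS /\ (r3 *m in4 F <= N)%MS.
Proof.
rewrite lagr_xiE; split; apply/submxP.
  exists (\matrix_(i, j) if (val j == 2 - i.*2)%N then 1 else 0); mx_compute.
exists (delta_mx 0 1); mx_compute.
Qed.

Lemma lagr1_pr2 : lagr (1%:M : 'M[F]_(3 + 3)) *m pr2 F = delta_mx 0 1.
Proof. rewrite /lagr mulmx1 fspanE; mx_compute. Qed.

Lemma lagr_xi_pr2E : lagr (xi F) *m pr2 F = \matrix_(i, j)
  if ((i == 0%N :> nat) && (j == 1%N :> nat)) || ((i == 2%N :> nat) && (j == 0%N :> nat))
  then 1 else 0.
Proof. rewrite lagr_xiE; mx_compute. Qed.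

Lemma lagr_xi_pr4E : lagr (xi F) *m pr4 F = \matrix_(i, j)
  if [|| (i == 0%N :> nat) && (j == 1%N :> nat), (i == 1%N :> nat) && (j == 3%N :> nat)
       | (i == 2%N :> nat) && (j == 2%N :> nat)] then 1 else 0.
Proof. rewrite lagr_xiE; mx_compute. Qed.

Lemma lagr_xi_pr2_full : row_full (lagr (xi F) *m pr2 F).
Proof.
pose S : 'M[F]_(2, 3) := \matrix_(i, j) if (val j == 2 - i.*2)%N then 1 else 0.
have S_pr2 : S *m (lagr (xi F) *m pr2 F) = 1%:M by rewrite lagr_xi_pr2E; mx_compute.
by rewrite /row_full eqn_leq rank_leq_col -{1}(mxrank1 F 2) -S_pr2 mxrankM_maxr.
Qed.

End ExplicitLagrangians.

Section Dim2.
Variable F : fieldType.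
Local Notation J1 := (Jmx F 1).

Lemma mx2_orthogonal_sub k (N : 'M[F]_(k, 1 + 1)) (v : 'rV[F]_(1 + 1)) :
  v != 0 -> N *m J1 *m v^T = 0 -> (N <= v)%MS.
Proof.
move=> v0 Nv; pose K := kermx (J1 *m v^T).
have NK : (N <= K)%MS by apply/sub_kermxP; rewrite mulmxA.
have vK : (v <= K)%MS by apply/sub_kermxP; rewrite mulmxA; mx_compute.
have rK : \rank K = 1%N by rewrite mxrank_ker mxrank_mul_unit_tr rank_rV v0.
apply: submx_trans NK _.
by rewrite -(mxrank_leqif_sup vK).2 rK rank_rV v0.
Qed.

Lemma SL2_row1 (v : 'rV[F]_2) : v != 0 -> exists2 A, inSL2 A & row 1 A = v.
Proof.
move=> v0; have [b0|b0] := eqVneq (v 0 1) 0.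
  have a0 : v 0 0 != 0.
    apply: contraNneq v0 => a0; apply/eqP/rowP => j; move: a0 b0.
    by case_ord j; rewrite !mxE !entryE ?modn_small //= => a0 b0; rewrite ?a0 ?b0.
  exists (\matrix_(i, j) if i == 0 then (if j == 0 then 0 else - (v 0 0)^-1) else v 0 j).
    by rewrite /inSL2 det_mx2 !mxE /= b0 mulr0 add0r mulNr mulVf // opprK.
  by apply/rowP => j; rewrite !mxE.
exists (\matrix_(i, j) if i == 0 then (if j == 0 then (v 0 1)^-1 else 0) else v 0 j).
  by rewrite /inSL2 det_mx2 !mxE /= mul0r subr0 mulVf.
by apply/rowP => j; rewrite !mxE.
Qed.

End Dim2.

Section LagrangianOrbits.
Variable F : fieldType.
Local Notation J1 := (Jmx F 1).
Local Notation J2 := (Jmx F 2).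
Local Notation J3 := (Jmx F 3).

Lemma lagr_row_free (g : 'M[F]_(3 + 3)) : inSp g -> row_free (lagr g).
Proof.
by move=> Sg; rewrite /row_free mxrankMfree ?row_free_unit ?inSp_unit //; exact: fspan_row_free.
Qed.

Lemma lagr_isotropic (g : 'M[F]_(3 + 3)) : inSp g -> lagr g *m J3 *m (lagr g)^T = 0.
Proof.
move/inSp_trmx => gJg.
have -> : lagr g *m J3 *m (lagr g)^T = fspan F *m (g *m J3 *m g^T) *m (fspan F)^T.
  by rewrite /lagr trmx_mul !mulmxA.
by rewrite gJg fspan_isotropic.
Qed.

Variable M : 'M[F]_(3, 3 + 3).
Hypotheses (M_free : row_free M) (M_iso : M *m J3 *m M^T = 0).
Local Notation M2 := (M *m pr2 F).
Local Notation M4 := (M *m pr4 F).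

Lemma pr_split : M = M2 *m in2 F + M4 *m in4 F.
Proof. by rewrite -!mulmxA -mulmxDr pr_in_sum mulmx1. Qed.

Lemma isotropic_split k l (Y : 'M[F]_(k, 3)) (Z : 'M[F]_(l, 3)) :
  Y *m M2 *m J1 *m (Z *m M2)^T + Y *m M4 *m J2 *m (Z *m M4)^T = 0.
Proof.
rewrite !mulmxA -gram3_split.
have -> : Y *m M *m J3 *m (Z *m M)^T = Y *m (M *m J3 *m M^T) *m Z^T.
  by rewrite trmx_mul !mulmxA.
by rewrite M_iso mulmx0 mul0mx.
Qed.

Lemma generic_pr2_full : row_free M4 -> row_full M2 /\ \rank (kermx M2) = 1%N.
Proof.
move=> free4; pose K := kermx M2.
have orthK : M4 *m J2 *m (K *m M4)^T = 0.
  by have := isotropic_split 1%:M K; rewrite !mul1mx mulmx_ker trmx0 mulmx0 add0r.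
have := mxrank_orthogonal orthK; rewrite (mxrankMfree K free4) (eqP free4) mxrank_ker.
by have := rank_leq_col M2; rewrite /row_full; split; [apply/eqP|]; lia.
Qed.

Lemma generic_cover (X : 'M[F]_(2, 3)) (x : 'rV[F]_3) (Z : 'M[F]_(3, 1)) :
  X *m M2 = 1%:M -> x *m M2 = 0 -> x != 0 -> 1%:M - M2 *m X = Z *m x ->
  exists2 h, inSp h & (M <= lagr (xi F) *m iota 1%:M h)%MS.
Proof.
move=> XM2 xM2 x0 MXZ; pose H := X *m M4; pose w := x *m M4.
have XM : X *m M = in2 F + H *m in4 F.
  by rewrite {1}pr_split mulmxDr (mulmxA X M2) (mulmxA X M4) XM2 mul1mx.
have xM : x *m M = w *m in4 F.
  by rewrite {1}pr_split mulmxDr (mulmxA x M2) (mulmxA x M4) xM2 mul0mx add0r.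
have w0 : w != 0.
  by apply: contraNneq x0 => w0; rewrite -(mulmx_free_eq0 _ M_free) xM w0 mul0mx.
have gramH : H *m J2 *m H^T = - J1.
  apply/eqP; rewrite -addr_eq0 addrC; apply/eqP.
  by have := isotropic_split X X; rewrite XM2 trmx1 mul1mx mulmx1.
have gramHw : H *m J2 *m w^T = 0.
  by have := isotropic_split X x; rewrite xM2 trmx0 mulmx0 add0r.
have s12 : sform (row 1 H) (row 0 H) = 1.
  by rewrite -sform_gram gramH JmxE !mxE /= ?modn_small //= opprK.
have s13 : sform (row 1 H) w = 0 by rewrite -(row_id 0 w) -sform_gram gramHw mxE.
have s23 : sform (row 0 H) w = 0 by rewrite -(row_id 0 w) -sform_gram gramHw mxE.
have [r0 Sh] := Sp4_extend_basis w0 s12 s13 s23.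
exists (rows4 r0 (row 1 H) (row 0 H) w) => //.
have [XN wN] := lagr_xi_iota_sub H r0 w.
have -> : M = M2 *m (X *m M) + Z *m (x *m M).
  by rewrite !mulmxA -MXZ -mulmxDl addrC subrK mul1mx.
by apply: addmx_sub; apply: mulmx_sub; rewrite ?XM ?xM.
Qed.

Lemma generic_orbit :
  row_free M4 -> exists2 h, inSp h & (M <= lagr (xi F) *m iota 1%:M h)%MS.
Proof.
move=> free4; have [full2 rK] := generic_pr2_full free4.
pose x := nz_row (kermx M2).
have x0 : x != 0 by rewrite nz_row_eq0 -mxrank_eq0 rK.
have Kx : (kermx M2 <= x)%MS.
  by rewrite -(mxrank_leqif_sup (nz_row_sub _)).2 rK rank_rV x0.
have [Z MXZ] : exists Z, 1%:M - M2 *m pinvmx M2 = Z *m x.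
  apply/submxP; apply: submx_trans Kx; apply/sub_kermxP.
  by rewrite mulmxBl mul1mx -(mulmxA M2) mulVpmx // mulmx1 subrr.
apply: generic_cover (mulVpmx full2) _ x0 MXZ.
exact/sub_kermxP/nz_row_sub.
Qed.

Lemma degenerate_isotropic (T : 'M[F]_(3, 1)) (x : 'rV[F]_3) :
  x *m M4 = 0 -> M2 = T *m (x *m M2) -> M4 *m J2 *m M4^T = 0 /\ \rank M4 = 2%N.
Proof.
move=> xM4 M2T; pose Y := 1%:M - T *m x.
have YM2 : Y *m M2 = 0 by rewrite mulmxBl mul1mx -mulmxA -M2T subrr.
have YM4 : Y *m M4 = M4 by rewrite mulmxBl mul1mx -mulmxA xM4 mulmx0 subr0.
have iso4 : M4 *m J2 *m M4^T = 0.
  by have := isotropic_split Y Y; rewrite YM2 YM4 trmx0 mulmx0 add0r.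
split => //; have := mxrank_orthogonal iso4.
have := mxrank_add (M2 *m in2 F) (M4 *m in4 F); rewrite -pr_split (eqP M_free).
have := mxrankM_maxl M2 (in2 F); have := mxrankM_maxl M4 (in4 F).
have : (\rank M2 <= 1)%N.
  by rewrite M2T; apply: leq_trans (mxrankM_maxl _ _) (rank_leq_col T).
lia.
Qed.

Lemma degenerate_cover (A : 'M[F]_2) (T : 'M[F]_(3, 1)) (Z : 'M[F]_(3, 2))
    (B : 'M[F]_(2, 2 + 2)) r0 r1 :
  M2 = T *m row 1 A -> M4 = Z *m B ->
  (M <= lagr 1%:M *m iota A (rows4 r0 r1 (row 0 B) (row 1 B)))%MS.
Proof.
move=> M2T M4Z; have [AN BN] := lagr1_iota_sub A B r0 r1.
rewrite pr_split M2T M4Z -(mulmxA T) -(mulmxA Z).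
by apply: addmx_sub; apply: mulmx_sub.
Qed.

Lemma degenerate_orbit : ~~ row_free M4 ->
  exists A h, [/\ inSL2 A, inSp h & (M <= lagr 1%:M *m iota A h)%MS].
Proof.
move=> nfree4; pose x := nz_row (kermx M4); pose v := x *m M2.
have xM4 : x *m M4 = 0 by apply/sub_kermxP/nz_row_sub.
have x0 : x != 0 by rewrite nz_row_eq0 -mxrank_eq0 mxrank_ker subn_eq0 row_leq_rank.
have xM : x *m M = v *m in2 F.
  by rewrite {1}pr_split mulmxDr (mulmxA x M2) (mulmxA x M4) xM4 mul0mx addr0.
have v0 : v != 0.
  by apply: contraNneq x0 => v0; rewrite -(mulmx_free_eq0 _ M_free) xM v0 mul0mx.
have [T M2T] : exists T, M2 = T *m v.
  apply/submxP/mx2_orthogonal_sub => //.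
  by have := isotropic_split 1%:M x; rewrite !mul1mx xM4 trmx0 mulmx0 addr0.
have [iso4 rank4] := degenerate_isotropic xM4 M2T.
have [B eqB] : exists B : 'M[F]_(2, 2 + 2), (B :=: M4)%MS.
  by move: (row_base M4) (eq_row_base M4); rewrite rank4 => B eqB; exists B.
have [Z M4Z] : exists Z, M4 = Z *m B by apply/submxP; rewrite eqB.
have [Y BY] : exists Y, B = Y *m M4 by apply/submxP; rewrite eqB.
have isoB : B *m J2 *m B^T = 0.
  have -> : B *m J2 *m B^T = Y *m (M4 *m J2 *m M4^T) *m Y^T by rewrite BY trmx_mul !mulmxA.
  by rewrite iso4 mulmx0 mul0mx.
have freeB : row_free B by rewrite /row_free eqB rank4.
have [r0 [r1 Sh]] := Sp4_extend_isotropic freeB isoB.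
have [A SA A1] := SL2_row1 v0.
exists A, (rows4 r0 r1 (row 0 B) (row 1 B)); split => //.
by apply: (degenerate_cover (T := T) (Z := Z)); rewrite ?A1.
Qed.

End LagrangianOrbits.

Section DoubleCosets.
Variable F : fieldType.

Lemma Sp6_double_cosets (g : 'M[F]_(3 + 3)) : inSp g -> inDC 1%:M g \/ inDC (xi F) g.
Proof.
move=> Sg; have free := lagr_row_free Sg; have iso := lagr_isotropic Sg.
case: (boolP (row_free (lagr g *m pr4 F))) => [free4|nfree4].
  right; have [h Sh sub] := generic_orbit free iso free4.
  exact: inDC_lagr (xi_Sp F) Sg (det1 _ _) Sh sub.
left; have [A [h [SA Sh sub]]] := degenerate_orbit free iso nfree4.
exact: inDC_lagr (inSp1 _ _) Sg SA Sh sub.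
Qed.

Lemma xi_notin_DC1 : ~ inDC 1%:M (xi F).
Proof.
(* The projection of the Lagrangian to W_2 has rank 2 for xi, but rank at most 1
   on the double coset of 1. *)
case=> p [A [h [[_ /Siegel_lagrP p_sub] _ _ xi_eq]]].
have sub : (lagr (xi F) <= lagr 1%:M *m iota A h)%MS.
  by rewrite xi_eq /lagr !mulmx1 mulmxA submxMr.
have := mxrankS (submxMr (pr2 F) sub).
rewrite -mulmxA iota_pr2 mulmxA lagr1_pr2 (eqP (lagr_xi_pr2_full F)).
by move/leq_trans/(_ (mxrankM_maxl _ _)); rewrite mxrank_delta.
Qed.

Lemma iota_Siegel (A : 'M[F]_2) (h : 'M[F]_(2 + 2)) :
  dlsubmx (iota A h) = 0 <-> A 1 0 = 0 /\ dlsubmx h = 0.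
Proof.
split => [/matrixP D | [A10 /matrixP D]].
  split; first by move: (D (inord 2) (inord 0)); mx_norm.
  apply/matrixP => i j; move: (D (inord i) (inord j.+1)).
  by case_ord i; case_ord j; mx_norm.
have D' i j : (i < 2)%N -> (j < 2)%N -> entry h (2 + i) j = 0.
  by move=> lt_i2 lt_j2; move: (D (inord i) (inord j)); mx_norm; rewrite !inordK.
move: A10; rewrite entryE => A10.
by apply/matrixP => i j; case_ord i; case_ord j; mx_norm; apply: D'.
Qed.

Lemma stabilizes1 (A : 'M[F]_2) (h : 'M[F]_(2 + 2)) : inSL2 A -> inSp h ->
  stabilizes 1%:M A h <-> inBorel A /\ inSiegel h.
Proof.
move=> SA Sh; rewrite (stabilizes_lagr (inSp1 _ _) SA Sh) /lagr mulmx1.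
split => [/Siegel_lagrP/iota_Siegel[]|[[_ A10] [_ dlh]]]; first by [].
by apply/Siegel_lagrP/iota_Siegel.
Qed.

End DoubleCosets.

Section StabilizerXi.
Variable F : fieldType.

Lemma mlev_mul (a b : F) (A B : 'M[F]_2) :
  mlev a A *m mlev b B = mlev (a * b) (A *m B).
Proof. by mx_compute; rewrite invfM. Qed.

Lemma mlev1 : mlev 1 (1%:M : 'M[F]_2) = 1%:M.
Proof. by mx_compute; rewrite invr1. Qed.

Lemma mlev_Sp (a : F) (A : 'M[F]_2) : a != 0 -> inSL2 A -> inSp (mlev a A).
Proof.
move=> a0; rewrite /inSL2 /inSp => detA.
have -> : (mlev a A)^T *m Jmx F 2 *m mlev a A = \matrix_(i, j)
    ((if (i + j == 3)%N then (if (i < 2)%N then 1 else -1) else 0) *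
     (if (i == 0%N :> nat) || (i == 3%N :> nat) then a * a^-1 else \det A)).
  rewrite det_mx2; mx_compute.
by rewrite JmxE; apply/matrixP => i j; rewrite !mxE detA mulfV // if_same mulr1.
Qed.

Lemma U12E (u : 'M[F]_(2 + 2)) : inU12 u -> u = \matrix_(i, j)
  if i == j then 1 else if (j < i)%N || ((i == 1%N :> nat) && (j == 2%N :> nat)) then 0
  else u i j.
Proof.
case=> _ [shape u12]; apply/matrixP => i j; rewrite mxE.
have [diag lower] := shape i j.
case: (boolP (i == j)) => [/diag //|_]; case: (boolP (j < i)%N) => [/lower //|_] /=.
case: ifP => // /andP[/eqP i1 /eqP j2].
by rewrite -u12; congr (u _ _); apply/val_inj; rewrite /= inordK ?i1 ?j2.
Qed.

Lemma lagr_xi_mlev_sub (a : F) (A : 'M[F]_2) :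
  (lagr (xi F) *m iota A (mlev a A) <= lagr (xi F))%MS.
Proof.
apply/submxP; exists (\matrix_(i, j) match (i : nat), (j : nat) with
  | 0, 0 => A 1 1 | 0, 2 => A 1 0 | 1, 1 => a^-1 | 2, 0 => A 0 1 | 2, 2 => A 0 0
  | _, _ => 0 end).
rewrite lagr_xiE; mx_compute.
Qed.

Lemma lagr_xi_U12_sub (u : 'M[F]_(2 + 2)) :
  inU12 u -> (lagr (xi F) *m iota 1%:M u <= lagr (xi F))%MS.
Proof.
move/U12E => ->; apply/submxP; exists (\matrix_(i, j) match (i : nat), (j : nat) with
  | 0, 0 | 1, 1 | 2, 2 => 1 | 0, 1 => u 1 3 | 2, 1 => u 2 3 | _, _ => 0 end).
rewrite lagr_xiE; mx_compute.
Qed.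

Lemma Sxi_stabilizes (A : 'M[F]_2) (h : 'M[F]_(2 + 2)) :
  inSL2 A -> inSp h -> inSxi A h -> stabilizes (xi F) A h.
Proof.
move=> SA Sh [a [u [_ _ Uu h_eq]]].
rewrite (stabilizes_lagr (xi_Sp F) SA Sh) h_eq.
have -> : iota A (mlev a A *m u) = iota A (mlev a A) *m iota 1%:M u by rewrite iota_mul mulmx1.
by rewrite mulmxA; apply: submx_trans (submxMr _ (lagr_xi_mlev_sub a A)) (lagr_xi_U12_sub Uu).
Qed.

Definition xi_stab_form (A : 'M[F]_2) (h : 'M[F]_(2 + 2)) : 'M[F]_(2 + 2) :=
  \matrix_(i, j)
    match (i : nat), (j : nat) with
    | 1, 1 => A 1 1 | 1, 2 => A 1 0 | 2, 1 => A 0 1 | 2, 2 => A 0 0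
    | 0, _ | _, 3 => h i j
    | _, _ => 0
    end.

Lemma stab_xi_form (A : 'M[F]_2) (h : 'M[F]_(2 + 2)) :
  (lagr (xi F) *m iota A h <= lagr (xi F))%MS -> h = xi_stab_form A h.
Proof.
case/submxP => Z eqZ.
have := congr1 (mulmx^~ (pr2 F)) eqZ; have := congr1 (mulmx^~ (pr4 F)) eqZ.
rewrite /= -!mulmxA iota_pr2 iota_pr4 !mulmxA -!(mulmxA Z) lagr_xi_pr2E lagr_xi_pr4E.
move=> /matrixP E4 /matrixP E2.
apply/matrixP => i j; rewrite /xi_stab_form mxE; case_ord i; case_ord j; mx_norm.
- by mx_entry (E4 (inord 0) (inord 0)).
- by mx_entry (E4 (inord 0) (inord 1)) => ->; mx_entry (E2 (inord 0) (inord 1)).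
- by mx_entry (E4 (inord 0) (inord 2)) => ->; mx_entry (E2 (inord 0) (inord 0)).
- by mx_entry (E4 (inord 2) (inord 0)).
- by mx_entry (E4 (inord 2) (inord 1)) => ->; mx_entry (E2 (inord 2) (inord 1)).
- by mx_entry (E4 (inord 2) (inord 2)) => ->; mx_entry (E2 (inord 2) (inord 0)).
- by mx_entry (E4 (inord 1) (inord 0)).
- by mx_entry (E4 (inord 1) (inord 1)) => ->; mx_entry (E2 (inord 1) (inord 1)).
- by mx_entry (E4 (inord 1) (inord 2)) => ->; mx_entry (E2 (inord 1) (inord 0)).
Qed.

Lemma Sxi_of_stab_form (A : 'M[F]_2) (h : 'M[F]_(2 + 2)) : inSL2 A -> inSp h ->
  h = xi_stab_form A h -> inSxi A h.
Proof.
move=> SA Sh hE.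
have detA : entry A 0 0 * entry A 1 1 - entry A 0 1 * entry A 1 0 = 1.
  by move: SA; rewrite /inSL2 det_mx2; mx_norm.
have a33 : entry h 0 0 * entry h 3 3 = 1.
  set a := entry h 0 0; set d := entry h 3 3.
  have /matrixP/(_ (inord 0) (inord 3)) := (inSp_trmx h).1 Sh.
  by rewrite hE /xi_stab_form JmxE; expand_mx; mx_norm.
set a := entry h 0 0 in a33 *.
have a0 : a != 0 by apply: contra_eq_neq a33 => ->; rewrite mul0r eq_sym oner_neq0.
pose A' : 'M[F]_2 := \matrix_(i, j) match (i : nat), (j : nat) with
  | 0, 0 => A 1 1 | 0, 1 => - A 0 1 | 1, 0 => - A 1 0 | _, _ => A 0 0 end.
have AA' : A *m A' = 1%:M by mx_compute; rewrite -detA; ring.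
have SA' : inSL2 A' by rewrite /inSL2 det_mx2; mx_norm; rewrite -detA; ring.
pose u := mlev a^-1 A' *m h.
exists a, u; split => //; last first.
  by rewrite /u mulmxA mlev_mul mulfV // AA' mlev1 mul1mx.
split; first exact: inSp_mul (mlev_Sp (invr_neq0 a0) SA') Sh.
rewrite /u hE /xi_stab_form; split; last by expand_mx; mx_norm; ring.
move=> i j; case_ord i; case_ord j; split => //= _; expand_mx; mx_norm; rewrite -/a; try ring.
- by rewrite mulVf.
- by rewrite -detA; ring.
- by rewrite -detA; ring.
- by rewrite invrK.
Qed.

Lemma stabilizes_xi (A : 'M[F]_2) (h : 'M[F]_(2 + 2)) : inSL2 A -> inSp h ->
  stabilizes (xi F) A h <-> inSxi A h.
Proof.
move=> SA Sh; split; last exact: Sxi_stabilizes.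
by move/(stabilizes_lagr (xi_Sp F) SA Sh)/stab_xi_form; apply: Sxi_of_stab_form.
Qed.

End StabilizerXi.

Theorem lemma5p1 (F : fieldExtType rat) :
  inSp (xi F) /\
  (* the double coset space has exactly the two elements I_6 and xi *)
  (forall g : 'M[F]_(3 + 3), inSp g -> inDC 1%:M g \/ inDC (xi F) g) /\
  ~ inDC 1%:M (xi F) /\
  (* (1) *)
  (lagr 1%:M == fspan F)%MS /\
  (forall (A : 'M[F]_2) (h : 'M[F]_(2 + 2)), inSL2 A -> inSp h ->
     (stabilizes 1%:M A h <-> inBorel A /\ inSiegel h)) /\
  (* (2) *)
  (lagr (xi F) == col_mx (e1 F + f3 F) (col_mx (e3 F + f1 F) (f2 F)))%MS /\
  (forall (A : 'M[F]_2) (h : 'M[F]_(2 + 2)), inSL2 A -> inSp h ->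
     (stabilizes (xi F) A h <-> inSxi A h)).
Proof.
split; first exact: xi_Sp.
split; first exact: Sp6_double_cosets.
split; first exact: xi_notin_DC1.
split; first by rewrite /lagr mulmx1 submx_refl.
split; first exact: stabilizes1.
split; first exact: lagr_xi_eqmx.
exact: stabilizes_xi.
Qed.
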